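(* Let $\hat\Sigma=(\hat\sigma_{ij})$ be the thresholded matrix produced in step (2) of DP-Thresholding, with $\gamma$ the constant of the concentration hypothesis below. There is a constant $C>0$ (depending only on $\sigma^2$) such that for every fixed pair $1\le i,j\le p$, with probability at least $1-Cp^{-9/2}$, $$|\hat\sigma_{ij}-\sigma_{ij}|\le 4\min\Big\{|\sigma_{ij}|,\ \gamma\sqrt{\tfrac{\log p}{n}}+\tfrac{4\sqrt{2\ln(1.25/\delta)}\sqrt{\log p}}{n\epsilon}\Big\}.$$
   Context: Setting: $x_1,\dots,x_n$ are i.i.d. random vectors in $\mathbb{R}^p$ (high-dimensional regime $p\gg n\ge \mathrm{poly}(\log p)$) with $\mathbb{E}x_i=0$, $\|x_i\|_2\le 1$ almost surely, sub-Gaussian with parameter $\sigma^2$: $\mathbb{P}\{|v^Tx_i|>t\}\le e^{-t^2/(2\sigma^2)}$ for all $t>0$ and all unit vectors $v$. The covariance $\Sigma=(\sigma_{ij})$ lies in $\mathcal{G}_0(s)$: for each column $j$, the vector of off-diagonal entries $(\sigma_{ij})_{i\neq j}$ has at most $s$ nonzeros. $\Sigma^*=(\sigma^*_{ij})=\frac1n\sum_i x_ix_i^T$. The constant $\gamma>0$ (depending only on $\sigma^2$) is one for which there is a constant $C_1$ with $\mathbb{P}(|\sigma^*_{ij}-\sigma_{ij}|>t)\le C_1e^{-8nt^2/\gamma^2}$ for all $i,j$ and all sufficiently small $|t|$, in particular $\mathbb{P}(|\sigma^*_{ij}-\sigma_{ij}|>\gamma\sqrt{\log p/n})\le C_1p^{-8}$.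 DP-Thresholding algorithm with input $0<\epsilon,\delta\le1$: (1) $\tilde\Sigma=(\tilde\sigma_{ij})=\Sigma^*+N$, where $N$ is a symmetric $p\times p$ matrix whose upper-triangular entries (including the diagonal) are i.i.d. $\mathcal{N}(0,\sigma_1^2)$, independent of the data, with $\sigma_1^2=\frac{2\ln(1.25/\delta)}{n^2\epsilon^2}$, lower triangle copied from upper; (2) $\hat\sigma_{ij}=\tilde\sigma_{ij}\cdot\mathbb{I}[|\tilde\sigma_{ij}|>\tau]$ with $\tau=\gamma\sqrt{\frac{\log p}{n}}+\frac{4\sqrt{2\ln(1.25/\delta)}\sqrt{\log p}}{n\epsilon}$; (3) with eigendecomposition $\hat\Sigma=\sum_i\lambda_iv_iv_i^T$, output $\Sigma^+=\sum_i\max\{\lambda_i,0\}v_iv_i^T$. *)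

From HB Require Import structures.
From mathcomp Require Import all_boot all_order all_algebra.
From mathcomp Require Import all_classical all_reals all_analysis.
From mathcomp Require Import normal_distribution.
Set Implicit Arguments.
Unset Strict Implicit.
Unset Printing Implicit Defensive.
Import Order.TTheory GRing.Theory Num.Def Num.Theory.
Local Open Scope classical_set_scope.
Local Open Scope ring_scope.

Section DPThresholding.
Context {d : measure_display} {T : measurableType d} {R : realType}.
Variable P : probability T R.
Variables (n p : nat).

Definition vec_event (y : 'I_p -> T -> R) (B : 'I_p -> set R) : set T :=
  \big[setI/setT]_(k < p) (y k @^-1` B k).

Definition data_event (x : 'I_n -> 'I_p -> T -> R) (B : 'I_n -> 'I_p -> set R)
  : set T := \big[setI/setT]_(i < n) vec_event (x i) (B i).

(* x_1, ..., x_n are identically distributed random vectors in R^p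
   (equal joint laws, checked on the generating pi-system of rectangles) *)
Definition ident_distr_vectors (x : 'I_n -> 'I_p -> T -> R) : Prop :=
  forall (i i' : 'I_n) (B : 'I_p -> set R), (forall k, measurable (B k)) ->
    P (vec_event (x i) B) = P (vec_event (x i') B).

Definition indep_vectors (x : 'I_n -> 'I_p -> T -> R) : Prop :=
  forall B : 'I_n -> 'I_p -> set R, (forall i k, measurable (B i k)) ->
    P (data_event x B) = (\prod_(i < n) P (vec_event (x i) (B i)))%E.

(* the upper-triangular entries (incl. diagonal) of N are mutually independent
   and jointly independent of the data *)
Definition noise_indep (x : 'I_n -> 'I_p -> T -> R) (N : 'I_p -> 'I_p -> T -> R)
  : Prop :=
  forall (B : 'I_n -> 'I_p -> set R) (BN : 'I_p -> 'I_p -> set R),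
    (forall i k, measurable (B i k)) -> (forall k l, measurable (BN k l)) ->
    P (data_event x B `&`
       \big[setI/setT]_(k < p) \big[setI/setT]_(l < p | (k <= l)%N)
          (N k l @^-1` BN k l)) =
    (P (data_event x B) *
       \prod_(k < p) \prod_(l < p | (k <= l)%N) P (N k l @^-1` BN k l))%E.

Definition sample_cov (x : 'I_n -> 'I_p -> T -> R) (k l : 'I_p) (w : T) : R :=
  n%:R^-1 * \sum_(i < n) x i k w * x i l w.

End DPThresholding.

Definition dp_sigma1 {R : realType} (n : nat) (eps delta : R) : R :=
  Num.sqrt (2 * ln ((5 / 4) / delta)) / (n%:R * eps).

Definition dp_tau {R : realType} (n p : nat) (gamma eps delta : R) : R :=
  gamma * Num.sqrt (ln p%:R / n%:R)
  + 4 * Num.sqrt (2 * ln ((5 / 4) / delta)) * Num.sqrt (ln p%:R) / (n%:R * eps).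

Definition sigma_tilde {T : Type} {R : realType} (n p : nat)
  (x : 'I_n -> 'I_p -> T -> R) (N : 'I_p -> 'I_p -> T -> R) (k l : 'I_p) (w : T) : R :=
  n%:R^-1 * (\sum_(i < n) x i k w * x i l w) + N k l w.

Definition sigma_hat {T : Type} {R : realType} (n p : nat) (gamma eps delta : R)
  (x : 'I_n -> 'I_p -> T -> R) (N : 'I_p -> 'I_p -> T -> R) (k l : 'I_p) (w : T) : R :=
  let s := sigma_tilde x N k l w in
  if dp_tau n p gamma eps delta < `|s| then s else 0.

From HB Require Import structures.
From mathcomp Require Import all_boot all_order all_algebra.
From mathcomp Require Import all_classical all_reals all_analysis.
From mathcomp Require Import normal_distribution measurable_realfun.
From mathcomp Require Import ring lra.
Import Order.TTheory GRing.Theory Num.Def Num.Theory.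
Local Open Scope classical_set_scope.
Local Open Scope ring_scope.

(* With [a = gamma sqrt(log p / n)] and [b = sigma_1 sqrt(log p)] we have
   [tau = a + 4 b].  Outside an event of probability [O(p^(-9/2))] both
   [|sigma*_ij - sigma_ij| <= 3a/4] (concentration of the sample covariance)
   and [|N_ij| <= 3b] (Gaussian tail), so [|tilde sigma_ij - sigma_ij| <= 3 tau/4].
   On that event hard thresholding at [tau] is accurate: a kept entry is
   within [3 tau / 4] of [sigma_ij] and forces [|sigma_ij| > tau / 4], while a
   killed entry has [|sigma_ij| <= 7 tau / 4].  For a single entry nothing else
   about the data (independence, sub-Gaussianity, sparsity) is needed. *)

Lemma hard_threshold_err_le (R : realFieldType) (st sg tau : R) : 0 <= tau ->
  `|st - sg| <= 3 / 4 * tau ->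
  `|(if tau < `|st| then st else 0) - sg| <= 4 * Num.min `|sg| tau.
Proof.
move=> tau_ge0 dev_le.
have min_ge m : m <= 4 * `|sg| -> m <= 4 * tau -> m <= 4 * Num.min `|sg| tau.
  by rewrite /Order.min; case: ifP.
have st_le : `|st| <= `|st - sg| + `|sg| by rewrite -{1}(subrK sg st) ler_normD.
have sg_le : `|sg| <= `|st - sg| + `|st| by rewrite distrC -{1}(subrK st sg) ler_normD.
case: ifPn => [kept|]; first by apply: min_ge; lra.
rewrite -leNgt sub0r normrN => killed.
by have := normr_ge0 sg => sg_ge0; apply: min_ge; lra.
Qed.

Section gaussian_tail.
Context {R : realType}.

Lemma normal_prob_le_shift (s t : R) (A : set R) : 0 < s -> measurable A ->
  (forall y, A y -> t ^+ 2 <= t * y) ->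
  (normal_prob 0 s A <= (expR (- t ^+ 2 / (s ^+ 2 *+ 2)))%:E)%E.
Proof.
move=> s_gt0 mA At.
have s_neq0 : s != 0 by rewrite gt_eqF.
have mpdf (m : R) : measurable_fun A (fun y : R => (normal_pdf m s y)%:E).
  by apply/measurable_EFinP/measurable_funTS; exact: measurable_normal_pdf.
apply: (@le_trans _ _ (\int[lebesgue_measure]_(y in A)
   ((expR (- t ^+ 2 / (s ^+ 2 *+ 2)))%:E * (normal_pdf t s y)%:E))%E).
  apply: ge0_le_integral => //.
  - by move=> y _; rewrite lee_fin normal_pdf_ge0.
  - exact: mpdf.
  - by apply: emeasurable_funM; [exact: measurable_cst|exact: mpdf].
  move=> y Ay; rewrite -EFinM lee_fin !normal_pdfE // mulrCA.
  apply: ler_wpM2l; first exact: normal_peak_ge0.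
  rewrite /normal_fun -expRD ler_expR subr0 -mulrDl.
  have den_gt0 : 0 < s ^+ 2 *+ 2 by rewrite pmulrn_lgt0 // exprn_gt0.
  by rewrite ler_pM2r ?invr_gt0 //; have := At y Ay; nra.
rewrite ge0_integralZl ?lee_fin ?expR_ge0 //;
  [|exact: mpdf|by move=> y _; rewrite lee_fin normal_pdf_ge0].
rewrite -[leRHS]mule1 lee_wpmul2l ?lee_fin ?expR_ge0 //.
exact: (probability_le1 (normal_prob t s)).
Qed.

Lemma normal_prob_norm_gt (s t : R) : 0 < s -> 0 <= t ->
  (normal_prob 0 s [set y | (t < `|y|)%R] <= (2 * expR (- t ^+ 2 / (s ^+ 2 *+ 2)))%:E)%E.
Proof.
move=> s_gt0 t_ge0.
have -> : [set y : R | t < `|y|] = `]t, +oo[ `|` `]-oo, - t[.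
  apply/seteqP; split => y /=; rewrite !in_itv /= ?andbT ltr_normr ltrNr.
    by case/orP; [left|right].
  by case=> ->; rewrite ?orbT.
apply: le_trans; first exact: measureU2.
rewrite mulr2n mulrDl mul1r EFinD; apply: leeD.
- by apply: normal_prob_le_shift => // y; rewrite /= in_itv /= andbT; nra.
- rewrite -[t ^+ 2]sqrrN; apply: normal_prob_le_shift => // y.
  by rewrite /= in_itv /=; nra.
Qed.

End gaussian_tail.

Section probability_complement.
Context {d : measure_display} {T : measurableType d} {R : realType}.
Variable P : probability T R.

Lemma probability_ge_cover_compl {E A B : set T} {a b : R} :
  measurable E -> measurable A -> measurable B -> ~` E `<=` A `|` B ->
  (P A <= a%:E)%E -> (P B <= b%:E)%E -> ((1 - (a + b))%:E <= P E)%E.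
Proof.
move=> mE mA mB EAB PA PB.
have PEC : (P (~` E) <= (a + b)%:E)%E.
  apply: le_trans (le_measure _ _ _ EAB) _; rewrite ?inE.
  - exact: measurableC.
  - exact: measurableU.
  by rewrite EFinD; apply: le_trans (measureU2 _ mA mB) (leeD PA PB).
rewrite -[E]setCK probability_setC; last exact: measurableC.
by rewrite EFinB; apply: leeB.
Qed.

End probability_complement.

Section rates.
Context {R : realType}.

Lemma powR_expR (q c : R) : 0 < q -> q `^ c = expR (c * ln q).
Proof. by move=> q_gt0; rewrite /powR gt_eqF. Qed.

Lemma expR_sample_cov_rate (n g q : R) : 0 < n -> 0 < g -> 1 <= q ->
  expR (- (8 * n * (3 / 4 * (g * Num.sqrt (ln q / n))) ^+ 2) / g ^+ 2) =
  q `^ (- (9 / 2)).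
Proof.
move=> n_gt0 g_gt0 q_ge1.
rewrite powR_expR ?(lt_le_trans ltr01) // !exprMn sqr_sqrtr; last first.
  by rewrite divr_ge0 ?ln_ge0 // ltW.
by congr expR; field; rewrite !gt_eqF.
Qed.

Lemma expR_noise_rate (s q : R) : s != 0 -> 1 <= q ->
  expR (- (3 * (s * Num.sqrt (ln q))) ^+ 2 / (s ^+ 2 *+ 2)) = q `^ (- (9 / 2)).
Proof.
move=> s_neq0 q_ge1.
rewrite powR_expR ?(lt_le_trans ltr01) // !exprMn sqr_sqrtr ?ln_ge0 // -mulr_natr.
by congr expR; field.
Qed.

Lemma dp_sigma1_gt0 (n : nat) (eps delta : R) : (0 < n)%N -> 0 < eps ->
  0 < delta <= 1 -> 0 < dp_sigma1 n eps delta.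
Proof.
move=> n_gt0 eps_gt0 /andP[delta_gt0 delta_le1].
rewrite /dp_sigma1 divr_gt0 ?mulr_gt0 ?ltr0n // sqrtr_gt0 mulr_gt0 // ln_gt0 //.
by rewrite ltr_pdivlMr // mul1r; lra.
Qed.

Lemma dp_tauE (n p : nat) (gamma eps delta : R) :
  dp_tau n p gamma eps delta = gamma * Num.sqrt (ln p%:R / n%:R)
    + 4 * (dp_sigma1 n eps delta * Num.sqrt (ln p%:R)).
Proof. by rewrite /dp_tau /dp_sigma1 mulrAC !mulrA. Qed.

End rates.

Section measurable_comparison.
Context {d : measure_display} {T : measurableType d} {R : realType}.
Implicit Types f g : T -> R.

Lemma measurable_set_ltr f g : measurable_fun setT f -> measurable_fun setT g ->
  measurable [set w | f w < g w].
Proof.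
move=> mf mg; rewrite -[X in measurable X]setTI.
by apply: measurable_fun_ltr.
Qed.

Lemma measurable_set_ler f g : measurable_fun setT f -> measurable_fun setT g ->
  measurable [set w | f w <= g w].
Proof.
move=> mf mg; rewrite -[X in measurable X]setTI.
by apply: measurable_fun_ler.
Qed.

Lemma measurable_fun_normB f (c : R) : measurable_fun setT f ->
  measurable_fun setT (fun w => `|f w - c|).
Proof.
move=> mf; apply: measurableT_comp; first exact: normr_measurable.
exact: measurable_funD mf (measurable_cst _).
Qed.

End measurable_comparison.

Section dp_measurability.
Context {d : measure_display} {T : measurableType d} {R : realType}.
Variables (n p : nat) (x : 'I_n -> 'I_p -> T -> R) (N : 'I_p -> 'I_p -> T -> R).
Hypothesis mx : forall i k, measurable_fun setT (x i k).
Hypothesis mN : forall k l, measurable_fun setT (N k l).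

Lemma measurable_sample_cov k l : measurable_fun setT (sample_cov x k l).
Proof.
apply: measurable_funM; first exact: measurable_cst.
by apply: measurable_sum => i; exact: measurable_funM.
Qed.

Lemma measurable_sigma_hat (gamma eps delta : R) k l :
  measurable_fun setT (sigma_hat gamma eps delta x N k l).
Proof.
have mst : measurable_fun setT (sigma_tilde x N k l).
  exact: measurable_funD (measurable_sample_cov k l) (mN k l).
apply: (measurable_fun_ifT _ mst (measurable_cst _)).
apply: measurable_fun_ltr; first exact: measurable_cst.
by apply: measurableT_comp; [exact: normr_measurable|exact: mst].
Qed.

End dp_measurability.

Section dp_threshold_entry.
Context {d : measure_display} {T : measurableType d} {R : realType}.
Context {P : probability T R} {n p : nat}.
Context {x : 'I_n -> 'I_p -> T -> R} {N : 'I_p -> 'I_p -> {RV P >-> R}}.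
Context {Sigma : 'M[R]_p} {gamma eps delta : R}.

Local Notation a := (gamma * Num.sqrt (ln p%:R / n%:R)).
Local Notation b := (dp_sigma1 n eps delta * Num.sqrt (ln p%:R)).

Lemma sigma_hat_err_le (i j : 'I_p) (w : T) : 0 <= a -> 0 <= b ->
  `|sample_cov x i j w - Sigma i j| <= 3 / 4 * a -> `|N i j w| <= 3 * b ->
  `|sigma_hat gamma eps delta x (fun k l => N k l) i j w - Sigma i j|
     <= 4 * Num.min `|Sigma i j| (dp_tau n p gamma eps delta).
Proof.
move=> a_ge0 b_ge0 cov_dev noise_dev.
apply: hard_threshold_err_le; rewrite dp_tauE; first lra.
have -> : sigma_tilde x (fun k l => N k l) i j w - Sigma i j =
          (sample_cov x i j w - Sigma i j) + N i j w.
  by rewrite /sigma_tilde /sample_cov addrAC.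
by apply: le_trans (ler_normD _ _) _; lra.
Qed.

Lemma sample_cov_dev_tail {C1 t0 : R} (i j : 'I_p) :
  (forall (k l : 'I_p) (t : R), 0 < t <= t0 ->
     (P [set w | (t < `|sample_cov x k l w - Sigma k l|)%R]
        <= (C1 * expR (- (8 * n%:R * t ^+ 2) / gamma ^+ 2))%:E)%E) ->
  (1 < p)%N -> (0 < n)%N -> 0 < gamma -> a <= t0 ->
  (P [set w | (3 / 4 * a < `|sample_cov x i j w - Sigma i j|)%R]
     <= (C1 * p%:R `^ (- (9 / 2)))%:E)%E.
Proof.
move=> conc p_gt1 n_gt0 gamma_gt0 a_le_t0.
have a_gt0 : 0 < a by rewrite mulr_gt0 // sqrtr_gt0 divr_gt0 ?ln_gt0 ?ltr0n ?ltr1n.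
rewrite -(expR_sample_cov_rate n%:R gamma) ?ltr0n ?ler1n ?(ltnW p_gt1) //.
by apply: conc; apply/andP; split; lra.
Qed.

Lemma noise_dev_tail (i j : 'I_p) :
  (forall k l w, N k l w = N l k w) ->
  (forall k l : 'I_p, (k <= l)%N -> forall A : set R, measurable A ->
     distribution P (N k l) A = normal_prob 0 (dp_sigma1 n eps delta) A) ->
  (0 < p)%N -> (0 < n)%N -> 0 < eps -> 0 < delta <= 1 ->
  (P [set w | (3 * b < `|N i j w|)%R] <= (2 * p%:R `^ (- (9 / 2)))%:E)%E.
Proof.
move=> N_sym N_normal p_gt0 n_gt0 eps_gt0 delta_01.
have s1_gt0 : 0 < dp_sigma1 n eps delta by exact: dp_sigma1_gt0.
have b_ge0 : 0 <= b by rewrite mulr_ge0 ?sqrtr_ge0 // ltW.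
wlog ij : i j / (i <= j)%N.
  move=> upper; case: (leqP i j) => [|/ltnW]; first exact: upper.
  by under eq_set do rewrite N_sym; apply: upper.
rewrite -(expR_noise_rate (dp_sigma1 n eps delta)) ?gt_eqF ?ler1n //.
have -> : [set w | 3 * b < `|N i j w|] = N i j @^-1` [set y | 3 * b < `|y|] by [].
rewrite -[P (_ @^-1` _)]/(distribution P (N i j) _) N_normal //; last first.
  by apply: measurable_set_ltr; [exact: measurable_cst|exact: normr_measurable].
by apply: normal_prob_norm_gt => //; rewrite mulr_ge0.
Qed.

Lemma sigma_hat_bad_event_sub (i j : 'I_p) : 0 <= a -> 0 <= b ->
  ~` [set w | `|sigma_hat gamma eps delta x (fun k l => N k l) i j w - Sigma i j|
                <= 4 * Num.min `|Sigma i j| (dp_tau n p gamma eps delta)]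
  `<=` [set w | 3 / 4 * a < `|sample_cov x i j w - Sigma i j|]
       `|` [set w | 3 * b < `|N i j w|].
Proof.
move=> a_ge0 b_ge0 w /= bad.
have [cov_dev|] := leP `|sample_cov x i j w - Sigma i j| (3 / 4 * a); last by left.
have [noise_dev|] := leP `|N i j w| (3 * b); last by right.
by case: bad; exact: sigma_hat_err_le.
Qed.

End dp_threshold_entry.

Theorem lemma3 (R : realType) (sigma2 gamma C1 t0 : R) :
  0 < sigma2 -> 0 < gamma -> 0 < t0 ->
  exists C : R, 0 < C /\
  forall (d : measure_display) (T : measurableType d) (P : probability T R)
    (n p s : nat)
    (x : 'I_n -> 'I_p -> {RV P >-> R}) (N : 'I_p -> 'I_p -> {RV P >-> R})
    (Sigma : 'M[R]_p) (eps delta : R),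
    (0 < n)%N ->
    0 < eps <= 1 -> 0 < delta <= 1 ->
    (* the x_i are i.i.d. *)
    ident_distr_vectors P (fun i k => x i k) ->
    indep_vectors P (fun i k => x i k) ->
    (* E x_i = 0 *)
    (forall i k, ('E_P[x i k] = 0)%E) ->
    (* ||x_i||_2 <= 1 almost surely *)
    (forall i, P [set w | \sum_(k < p) x i k w ^+ 2 <= 1] = 1%E) ->
    (* sub-Gaussian with parameter sigma2 *)
    (forall i (v : 'I_p -> R), \sum_(k < p) v k ^+ 2 = 1 -> forall t, 0 < t ->
       (P [set w | (t < `|\sum_(k < p) v k * x i k w|)%R]
          <= (expR (- t ^+ 2 / (2 * sigma2)))%:E)%E) ->
    (* Sigma is the covariance matrix *)
    (forall i k l, ('E_P[fun w => (x i k w * x i l w)%R] = (Sigma k l)%:E)%E) ->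
    (* Sigma in G_0(s) *)
    (forall j : 'I_p, (#|[pred i : 'I_p | (i != j) && (Sigma i j != 0%R)]| <= s)%N) ->
    (* concentration hypothesis for all sufficiently small t (0 < t <= t0) *)
    (forall (k l : 'I_p) (t : R), 0 < t <= t0 ->
       (P [set w | (t < `|sample_cov (fun i k => x i k) k l w - Sigma k l|)%R]
          <= (C1 * expR (- (8 * n%:R * t ^+ 2) / gamma ^+ 2))%:E)%E) ->
    (* regime n >= poly(log p): gamma sqrt(log p / n) is in the small-t range *)
    gamma * Num.sqrt (ln p%:R / n%:R) <= t0 ->
    (* the noise matrix N *)
    (forall k l w, N k l w = N l k w) ->
    (forall k l : 'I_p, (k <= l)%N -> forall A : set R, measurable A ->
       distribution P (N k l) A = normal_prob 0 (dp_sigma1 n eps delta) A) ->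
    noise_indep P (fun i k => x i k) (fun k l => N k l) ->
    forall i j : 'I_p,
      ((1 - C * p%:R `^ (- (9 / 2)))%:E <=
        P [set w | (`|sigma_hat gamma eps delta (fun i k => x i k)
                       (fun k l => N k l) i j w - Sigma i j|
                   <= 4 * Num.min `|Sigma i j| (dp_tau n p gamma eps delta))%R])%E.
Proof.
move=> _ gamma_gt0 _; exists (`|C1| + 2); split; first by have := normr_ge0 C1; lra.
move=> d T P n p s x N Sigma eps delta n_gt0 /andP[eps_gt0 _] delta_01
  _ _ _ _ _ _ _ conc a_le_t0 N_sym N_normal _.
have mx i k : measurable_fun setT (x i k) by exact: measurable_funPT.
have mN k l : measurable_fun setT (N k l) by exact: measurable_funPT.
move=> i j.
have p_gt0 : (0 < p)%N := leq_ltn_trans (leq0n i) (ltn_ord i).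
have [p_gt1|p_le1] := ltnP 1 p; last first.
  have -> : p%:R = 1 :> R by apply/eqP; rewrite pnatr_eq1 eqn_leq p_le1.
  rewrite powR1 mulr1; apply: le_trans (measure_ge0 P _).
  by rewrite lee_fin; have := normr_ge0 C1; lra.
have q_ge0 : 0 <= p%:R `^ (- (9 / 2)) :> R by exact: powR_ge0.
have a_ge0 : 0 <= gamma * Num.sqrt (ln p%:R / n%:R) by rewrite mulr_ge0 ?sqrtr_ge0 ?ltW.
have b_ge0 : 0 <= dp_sigma1 n eps delta * Num.sqrt (ln p%:R).
  by rewrite mulr_ge0 ?sqrtr_ge0 // ltW // dp_sigma1_gt0.
apply: (le_trans _ (probability_ge_cover_compl P _ _ _
  (sigma_hat_bad_event_sub i j a_ge0 b_ge0)
  (sample_cov_dev_tail i j conc p_gt1 n_gt0 gamma_gt0 a_le_t0)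
  (noise_dev_tail i j N_sym N_normal p_gt0 n_gt0 eps_gt0 delta_01))).
- by rewrite lee_fin; have := ler_norm C1; nra.
- apply: measurable_set_ler; last exact: measurable_cst.
  exact/measurable_fun_normB/measurable_sigma_hat.
- apply: measurable_set_ltr; first exact: measurable_cst.
  exact/measurable_fun_normB/measurable_sample_cov.
- apply: measurable_set_ltr; first exact: measurable_cst.
  by apply: measurableT_comp; [exact: normr_measurable|exact: mN].
Qed.
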